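(* Let $S$ and $T$ be $*$-regular semigroups, regarded as DRC-semigroups via $D(a)=aa^\dagger$, $R(a)=a^\dagger a$. If $\phi:S\to T$ is a DRC-morphism (a semigroup homomorphism with $D(a)\phi=D(a\phi)$ and $R(a)\phi=R(a\phi)$ for all $a$), then $(a^\dagger)\phi=(a\phi)^\dagger$ for all $a\in S$.
   Context: A $*$-regular semigroup is a semigroup $S$ with an involution $a\mapsto a^*$ ($a^{**}=a$, $(ab)^*=b^*a^*$) such that each $a\in S$ has a (unique) element $a^\dagger$ (the Moore–Penrose inverse) with $aa^\dagger a=a$, $a^\dagger aa^\dagger=a^\dagger$, $(aa^\dagger)^*=aa^\dagger$, $(a^\dagger a)^*=a^\dagger a$. With $D(a)=aa^\dagger$ and $R(a)=a^\dagger a$, it is a DRC-semigroup (an algebra $(S,\cdot,D,R)$ satisfying $D(a)a=a$, $aR(a)=a$, $D(ab)=D(aD(b))$, $R(ab)=R(R(a)b)$, $D(ab)=D(a)D(ab)D(a)$, $R(ab)=R(b)R(ab)R(b)$, $R(D(a))=D(a)$, $D(R(a))=R(a)$). *)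

Definition is_MP_inverse {S : Type} (mul : S -> S -> S) (star : S -> S) (a x : S) : Prop :=
  mul (mul a x) a = a /\ mul (mul x a) x = x /\
  star (mul a x) = mul a x /\ star (mul x a) = mul x a.

Record StarRegularSemigroup := {
  carrier :> Type;
  smul : carrier -> carrier -> carrier;
  star : carrier -> carrier;
  dagger : carrier -> carrier;
  smul_assoc : forall a b c, smul a (smul b c) = smul (smul a b) c;
  star_invol : forall a, star (star a) = a;
  star_antimul : forall a b, star (smul a b) = smul (star b) (star a);
  dagger_MP : forall a, is_MP_inverse smul star a (dagger a)
}.

Definition Dop (S : StarRegularSemigroup) (a : S) : S := smul S a (dagger S a).
Definition Rop (S : StarRegularSemigroup) (a : S) : S := smul S (dagger S a) a.

Definition DRC_morphism (S T : StarRegularSemigroup) (phi : S -> T) : Prop :=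
  (forall a b : S, phi (smul S a b) = smul T (phi a) (phi b)) /\
  (forall a : S, phi (Dop S a) = Dop T (phi a)) /\
  (forall a : S, phi (Rop S a) = Rop T (phi a)).


(* A DRC-morphism sends [a†] to an element [x] with [x (a phi) x = x] whose
   products with [a phi] are the projections [R (a phi)] and [D (a phi)];
   these three equations already force [x = (a phi)†], since with [b = a phi]
   we get [x = x b x = b† b x = b† b b† = b†]. *)

Section StarRegularSemigroup.

Variable S : StarRegularSemigroup.

Local Infix "*" := (smul S).

Lemma dagger_eq_of_projections (b x : S) :
  x * b * x = x -> x * b = Rop S b -> b * x = Dop S b -> x = dagger S b.
Proof.
  intros Hxbx Hxb Hbx.
  destruct (dagger_MP S b) as [_ [Hdagger _]].
  unfold Rop, Dop in *.
  rewrite <- Hxbx, Hxb, <- smul_assoc, Hbx, smul_assoc.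
  exact Hdagger.
Qed.

End StarRegularSemigroup.

Theorem proposition9p3 (S T : StarRegularSemigroup) (phi : S -> T) :
  DRC_morphism S T phi -> forall a : S, phi (dagger S a) = dagger T (phi a).
Proof.
  intros [Hmul [HD HR]] a.
  destruct (dagger_MP S a) as [_ [Hdagger _]].
  apply dagger_eq_of_projections.
  - rewrite <- !Hmul, Hdagger. reflexivity.
  - rewrite <- Hmul. exact (HR a).
  - rewrite <- Hmul. exact (HD a).
Qed.
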